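(* Assume $a_T/T\to\infty$. Let $\hat c_{\mathrm R}(x,\mathbb P,T)=\max_{i\in\Sigma}\ell(x,i)$ and $\hat x^{\mathrm R}_T(\mathbb P)\in\arg\min_{x\in\mathcal X}\max_{i\in\Sigma}\ell(x,i)$. Then $(\hat c_{\mathrm R},\hat x^{\mathrm R})$ is a predictor–prescriptor pair satisfying the prescription out-of-sample guarantee with speed $(a_T)$, and for every predictor–prescriptor pair $(\hat c,\hat x)$ satisfying the prescription out-of-sample guarantee with speed $(a_T)$ we have $(\hat c_{\mathrm R},\hat x^{\mathrm R})\preceq_{\hat{\mathcal X}}(\hat c,\hat x)$.
   Context: Setting: $\Sigma=\{1,\dots,d\}$ ($d\ge2$) is finite; $\mathcal P\subset\mathbb R^d$ is the probability simplex over $\Sigma$ and $\mathcal P^o$ its relative interior (all entries positive). $\mathcal X\subset\mathbb R^n$ is compact and $\ell:\mathcal X\times\Sigma\to\mathbb R$ is continuous in $x$ for each $i$. For $x\in\mathcal X$, $\mu\in\mathbb R^d$ let $c(x,\mu)=\sum_{i\in\Sigma}\ell(x,i)\mu(i)$ and $c^\star(\mathbb P)=\min_{x\in\mathcal X}c(x,\mathbb P)$. Data $\xi_1,\xi_2,\dots$ are i.i.d. with law $\mathbb P\in\mathcal P$, $\mathbb P^\infty$ denotes their joint law, and $\hat{\mathbb P}_T(i)=\frac1T\sum_{t=1}^T\mathbf 1\{\xi_t=i\}$. $(a_T)_{T\ge1}$ is a sequence of positive reals with $a_T\to\infty$. A predictor is a sequence $\hat c=(\hat c(\cdot,\cdot,T))_{T\in\mathbb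 N}$ of functions $\mathcal X\times\mathcal P\to\mathbb R$. It is regular, written $\hat c\in\mathcal C$, if (i) the sequence $(\hat c(\cdot,\cdot,T))_T$ is uniformly bounded and equicontinuous on $\mathcal X\times\mathcal P$, and (ii) each $\hat c(x,\cdot,T)$ is differentiable in $\mathbb P$ and the sequence of derivative maps $(x,\mathbb P)\mapsto\nabla_{\mathbb P}\hat c(x,\mathbb P,T)$ is uniformly bounded and equicontinuous. (A sequence $(f_T)$ is equicontinuous if for every point $y$ and $\varepsilon>0$ there is a neighbourhood $U$ of $y$ with $|f_T(y)-f_T(z)|<\varepsilon$ for all $z\in U$ and all $T$.) A predictor–prescriptor pair $(\hat c,\hat x)$ consists of $\hat c\in\mathcal C$ and functions $\hat x_T:\mathcal P\to\mathcal X$ with $\hat x_T(\mathbb P)\in\arg\min_{x\in\mathcal X}\hat c(x,\mathbb P,T)$ for all $\mathbb P,T$; put $\hat c^\star(\mathbb P,T)=\hat c(\hat x_T(\mathbb P),\mathbb P,T)$. Prescription out-of-sample guarantee with speed $(a_T)$: for all $\mathbb P\in\mathcal P^o$, $\limsup_{T\to\infty}\frac1{a_T}\log\mathbb P^\infty\big(c(\hat x_T(\hat{\mathbb P}_T),\mathbb P)>\hat c^\star(\hat{\mathbb P}_T,T)\big)\le-1$. Order: $(\hat c_1,\hat x_1)\preceq_{\hat{\mathcal X}}(\hat c_2,\hat x_2)$ iff for all $\mathbb P\in\mathcal P^o$, $\limsup_{T\to\infty}\frac{|\hat c_1^\star(\mathbb P,T)-c^\star(\mathbb P)|}{|\hat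 c_2^\star(\mathbb P,T)-c^\star(\mathbb P)|}\le1$ (convention $0/0=1$). *)

From HB Require Import structures.
From mathcomp Require Import all_boot all_order all_algebra.
From mathcomp Require Import all_classical all_reals all_analysis.
Set Implicit Arguments. Unset Strict Implicit. Unset Printing Implicit Defensive.
Import Order.TTheory GRing.Theory Num.Theory.
Import numFieldNormedType.Exports.
Local Open Scope classical_set_scope.
Local Open Scope ring_scope.

Section Defs.
Variable R : realType.
Variables (n d : nat).
(* decisions x live in 'rV[R]_n, distributions / vectors mu live in 'rV[R]_d,
   Sigma = 'I_d, a loss is l : 'rV_n -> 'I_d -> R. *)

Definition simplex (P : 'rV[R]_d) : Prop :=
  (forall i, 0 <= P ord0 i) /\ \sum_i P ord0 i = 1.
Definition simplex_int (P : 'rV[R]_d) : Prop :=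
  (forall i, 0 < P ord0 i) /\ \sum_i P ord0 i = 1.

Definition cost (l : 'rV[R]_n -> 'I_d -> R) (x : 'rV[R]_n) (mu : 'rV[R]_d) : R :=
  \sum_i l x i * mu ord0 i.

(* c*(P) = min_{x in X} c(x,P)  (the inf is attained: X compact, c continuous) *)
Definition cstar (X : set 'rV[R]_n) (l : 'rV[R]_n -> 'I_d -> R) (P : 'rV[R]_d) : R :=
  inf [set cost l x P | x in X].

Definition maxloss (l : 'rV[R]_n -> 'I_d -> R) (x : 'rV[R]_n) : R :=
  (match d return ('I_d -> R) -> R with
   | 0 => fun _ => 0
   | d'.+1 => fun f => \big[Num.max/f ord0]_(i < d'.+1) f i
   end) (l x).

Definition predictor := 'rV[R]_n -> 'rV[R]_d -> nat -> R.
Definition prescriptor := nat -> 'rV[R]_d -> 'rV[R]_n.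

Definition unif_bounded (X : set 'rV[R]_n) (f : 'rV[R]_n -> 'rV[R]_d -> nat -> R) :=
  exists M : R, forall x P T, X x -> simplex P -> `|f x P T| <= M.
Definition equicont (X : set 'rV[R]_n) (f : 'rV[R]_n -> 'rV[R]_d -> nat -> R) :=
  forall x P, X x -> simplex P -> forall eps : R, 0 < eps ->
    exists2 delta : R, 0 < delta &
      forall y Q, X y -> simplex Q -> `|y - x| < delta -> `|Q - P| < delta ->
        forall T, `|f x P T - f y Q T| < eps.

Definition is_gradient (X : set 'rV[R]_n) (chat : predictor)
    (g : 'rV[R]_n -> 'rV[R]_d -> nat -> 'rV[R]_d) :=
  forall x P T, X x -> simplex P -> forall eps : R, 0 < eps ->
    exists2 delta : R, 0 < delta &
      forall Q, simplex Q -> `|Q - P| < delta ->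
        `|chat x Q T - chat x P T - \sum_i g x P T ord0 i * (Q ord0 i - P ord0 i)|
          <= eps * `|Q - P|.

Definition regular (X : set 'rV[R]_n) (chat : predictor) : Prop :=
  unif_bounded X chat /\ equicont X chat /\
  exists g : 'rV[R]_n -> 'rV[R]_d -> nat -> 'rV[R]_d,
    is_gradient X chat g /\
    (forall i, unif_bounded X (fun x P T => g x P T ord0 i)) /\
    (forall i, equicont X (fun x P T => g x P T ord0 i)).

Definition pp_pair (X : set 'rV[R]_n) (chat : predictor) (xhat : prescriptor) : Prop :=
  regular X chat /\
  forall P T, simplex P ->
    X (xhat T P) /\ forall y, X y -> chat (xhat T P) P T <= chat y P T.

Definition chat_star (chat : predictor) (xhat : prescriptor) (P : 'rV[R]_d) (T : nat) : R :=
  chat (xhat T P) P T.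

Definition empirical (T : nat) (s : {ffun 'I_T -> 'I_d}) : 'rV[R]_d :=
  \row_i (#|[set t | s t == i]|%:R / T%:R).

(* P^oo(E) for an event E depending on the first T samples, xi_t i.i.d. ~ P *)
Definition probT (P : 'rV[R]_d) (T : nat) (E : {ffun 'I_T -> 'I_d} -> bool) : R :=
  \sum_(s : {ffun 'I_T -> 'I_d} | E s) \prod_(t < T) P ord0 (s t).

Definition elog (p : R) : \bar R := if p == 0 then (-oo)%E else (ln p)%:E.

Definition oos_guarantee (l : 'rV[R]_n -> 'I_d -> R) (a : nat -> R)
    (chat : predictor) (xhat : prescriptor) : Prop :=
  forall P, simplex_int P ->
    (limn_esup (fun T : nat =>
       ((a T)^-1)%:E *
       elog (probT P (fun s : {ffun 'I_T -> 'I_d} =>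
               (cost l (xhat T (empirical s)) P >
                chat_star chat xhat (empirical s) T)%R))) <= (-1)%:E)%E.

Definition eratio (u v : R) : \bar R :=
  if v == 0 then (if u == 0 then 1%E else (+oo)%E) else (u / v)%:E.

Definition pp_le (X : set 'rV[R]_n) (l : 'rV[R]_n -> 'I_d -> R)
    (c1 : predictor) (x1 : prescriptor) (c2 : predictor) (x2 : prescriptor) : Prop :=
  forall P, simplex_int P ->
    (limn_esup (fun T : nat =>
       eratio `|chat_star c1 x1 P T - cstar X l P|%R
              `|chat_star c2 x2 P T - cstar X l P|%R) <= 1%E)%E.

End Defs.

(* Let m = min_{x in X} max_i l(x,i).  The robust pair predicts m, which is an
   upper bound of every expected cost c(x,P) <= max_i l(x,i); hence its
   disappointment event is empty (out-of-sample guarantee), and it is regular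
   because max_i l(.,i) is continuous on the compact X and constant in P.

   Under an interior P, a single sample of length
   T has probability at least (prod_i P(i))^T, which decays only exponentially;
   so eventually no sample at all may be disappointing.  Using interior
   distributions concentrated near each vertex i, the prediction at any
   empirical distribution Q therefore bounds max_i l(xhat_T(Q), i) >= m up to
   any e > 0.  Empirical distributions are dense in the simplex and chat is
   equicontinuous, uniformly over the compact X, so chat*(P,T) >= m - e
   eventually, for every distribution P.  Since c*(P) <= m = chat_R*(P,T), the
   ratio |m - c*(P)| / |chat*(P,T) - c*(P)| has limsup at most 1. *)

From HB Require Import structures.
From mathcomp Require Import all_boot all_order all_algebra.
From mathcomp Require Import all_classical all_reals all_analysis.
From mathcomp Require Import ring lra.
Import Order.TTheory GRing.Theory Num.Theory.
Import numFieldNormedType.Exports.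
Local Open Scope classical_set_scope.
Local Open Scope ring_scope.
Set Implicit Arguments. Unset Strict Implicit. Unset Printing Implicit Defensive.

Section MaxLoss.
Variables (R : realType) (n d : nat).
Implicit Types (l : 'rV[R]_n -> 'I_d.+1 -> R) (x y : 'rV[R]_n).

Lemma maxloss_ge l x i : l x i <= maxloss l x.
Proof. exact: le_bigmax. Qed.

Lemma maxloss_attained l x : exists i, maxloss l x = l x i.
Proof.
rewrite /maxloss; apply: (big_rec (fun m => exists i, m = l x i)); first by exists ord0.
move=> i m _ [j ->].
by case: (leP (l x i) (l x j)) => _; [exists j | exists i].
Qed.

Lemma cost_le_maxloss l x P : simplex P -> cost l x P <= maxloss l x.
Proof.
move=> [P0 P1]; apply: (@le_trans _ _ (\sum_i maxloss l x * P ord0 i)).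
  by apply: ler_sum => i _; apply: ler_wpM2r => //; apply: maxloss_ge.
by rewrite -mulr_sumr P1 mulr1.
Qed.

Lemma maxloss_dist l x y e : (forall i, `|l x i - l y i| < e) ->
  `|maxloss l x - maxloss l y| < e.
Proof.
move=> hxy; have [i ei] := maxloss_attained l x; have [j ej] := maxloss_attained l y.
rewrite ltr_norml; apply/andP; split.
  have := hxy j; rewrite ltr_norml => /andP[h _].
  have := maxloss_ge l x j; rewrite ej; lra.
have := hxy i; rewrite ltr_norml => /andP[_ h].
have := maxloss_ge l y i; rewrite ei; lra.
Qed.

Lemma maxloss_continuous (X : set 'rV[R]_n) l :
  (forall i, {within X, continuous (fun x => l x i)}) ->
  {within X, continuous (maxloss l)}.
Proof.
move=> hl; apply/subspace_continuousP => x Xx; apply/cvgrPdist_lt => e e0.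
have : \forall y \near within X (nbhs x), forall i, `|l x i - l y i| < e.
  apply: filter_forall => i.
  by have /cvgrPdist_lt := (subspace_continuousP _ _).1 (hl i) x Xx; apply.
by apply: filterS => y; apply: maxloss_dist.
Qed.
End MaxLoss.

Lemma loss_bounded (R : realType) (n d : nat) (X : set 'rV[R]_n)
    (l : 'rV[R]_n -> 'I_d -> R) : compact X ->
  (forall i, {within X, continuous (fun x => l x i)}) ->
  exists M : R, 0 <= M /\ forall x i, X x -> `|l x i| <= M.
Proof.
move=> hX hl.
have /choice [Mi hMi] : forall i, exists M, forall x, X x -> `|l x i| <= M.
  move=> i; have [M [_ hM]] := compact_bounded (continuous_compact (hl i) hX).
  exists (M + 1) => x Xx; apply: (hM (M + 1)); first by rewrite ltrDl.
  by exists x.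
exists (\big[Num.max/0]_i Mi i); split.
  by elim/big_rec: _ => // i m _ hm; rewrite le_max hm orbT.
by move=> x i Xx; apply: le_trans (hMi i x Xx) (le_bigmax _ _ _).
Qed.

Section EventuallyLimsup.
Variable R : realType.
Local Open Scope ereal_scope.
Implicit Types (u : nat -> \bar R) (c : \bar R).

Lemma limn_esup_le_near u c : (\forall T \near \oo, u T <= c) -> limn_esup u <= c.
Proof.
move=> uc; rewrite /limn_esup limf_esupE.
apply: le_trans (ereal_inf_lbound _) _; first by exists [set T | u T <= c].
by apply: ge_ereal_sup => _ [T uTc <-].
Qed.

Lemma limn_esup_lt_near u c : limn_esup u < c -> \forall T \near \oo, u T < c.
Proof.
rewrite /limn_esup limf_esupE => /ereal_inf_lt [_ [V hV <-] supVc].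
apply: filterS hV => T VT; apply: le_lt_trans supVc.
by apply: ereal_sup_ubound; exists T.
Qed.
End EventuallyLimsup.

Definition robust_predictor (R : realType) (n d : nat) (l : 'rV[R]_n -> 'I_d -> R) :
  predictor R n d := fun x _ _ => maxloss l x.

Section RobustPair.
Variables (R : realType) (n d : nat) (X : set 'rV[R]_n) (l : 'rV[R]_n -> 'I_d.+1 -> R).
Local Notation cR := (robust_predictor l).

(* The robust predictor is regular: bounded and equicontinuous by continuity of maxloss on the
   compact set X, and differentiable in P with the zero gradient. *)
Lemma robust_regular : compact X ->
  (forall i, {within X, continuous (fun x => l x i)}) -> regular X cR.
Proof.
move=> hX hl; split; [|split].
- have [M [_ hM]] := loss_bounded hX hl.
  exists M => x P T Xx _; rewrite /robust_predictor.
  by have [i ->] := maxloss_attained l x; apply: hM.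
- move=> x P Xx _ e e0.
  have /cvgrPdist_lt/(_ e e0) := (subspace_continuousP _ _).1 (maxloss_continuous hl) x Xx.
  move=> /nbhs_ballP [delta d0 hdelta]; exists delta => // y Q Xy _ xy _ T.
  by apply: hdelta => //; rewrite -ball_normE /ball_ /= distrC.
- exists (fun _ _ _ => 0); split; [|split].
  + move=> x P T _ _ e e0; exists 1 => // Q _ _.
    rewrite big1 => [|i _]; last by rewrite mxE mul0r.
    by rewrite !subrr normr0 mulr_ge0 // ltW.
  + by move=> i; exists 0 => *; rewrite mxE normr0.
  + by move=> i x P _ _ e e0; exists 1 => // *; rewrite !mxE subrr normr0.
Qed.

Lemma robust_pp_pair (xR : prescriptor R n d.+1) : compact X ->
  (forall i, {within X, continuous (fun x => l x i)}) ->
  (forall T P, X (xR T P) /\ forall y, X y -> maxloss l (xR T P) <= maxloss l y) ->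
  pp_pair X cR xR.
Proof. by move=> hX hl hxR; split=> [|P T _]; [apply: robust_regular | apply: hxR]. Qed.

(* The robust prediction never underestimates the true cost, so the
   disappointment event is empty and has probability 0, i.e. log-probability -oo. *)
Lemma robust_oos_guarantee (a : nat -> R) (xR : prescriptor R n d.+1) :
  (forall T, (0 < T)%N -> 0 < a T) -> oos_guarantee l a cR xR.
Proof.
move=> ha P [P0 P1]; apply: limn_esup_le_near; near=> T.
rewrite /probT big_pred0 => [|s]; last first.
  by rewrite ltNge cost_le_maxloss //; split=> // i; apply/ltW.
rewrite /elog eqxx mulrNy gtr0_sg ?mul1e ?invr_gt0 ?ha ?leNye //.
by near: T; exists 1%N.
Unshelve. all: by end_near. Qed.
End RobustPair.

Section SampleCalibration.
Variables (R : realType) (n d : nat).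

Lemma probT_ge_sample (P : 'rV[R]_d) T (E : {ffun 'I_T -> 'I_d} -> bool) s :
  (forall i, 0 <= P ord0 i) -> \sum_i P ord0 i = 1 -> E s ->
  (\prod_i P ord0 i) ^+ T <= probT P E.
Proof.
move=> P0 P1 Es; rewrite /probT (bigD1 s) //= -[X in X <= _]addr0.
apply: lerD; last by apply: sumr_ge0 => s' _; apply: prodr_ge0.
rewrite -[T in _ ^+ T]card_ord -prodr_const; apply: ler_prod => t _.
rewrite prodr_ge0 //= (bigD1 (s t)) //= ler_piMr //.
apply: prodr_ile1 => i _; rewrite P0 -P1 (bigD1 i) //= lerDl.
by apply: sumr_ge0.
Qed.

(* Since a_T / T -> +oo, a guarantee at speed a_T forbids the disappointment
   event from containing any sample at all: the probability of a sample decays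
   only exponentially in T. *)
Lemma oos_guarantee_calibrated (l : 'rV[R]_n -> 'I_d -> R) (a : nat -> R)
    (chat : predictor R n d) (xhat : prescriptor R n d) :
  (forall T, (0 < T)%N -> 0 < a T) -> (fun T : nat => a T / T%:R) @ \oo --> +oo ->
  oos_guarantee l a chat xhat -> forall P, simplex_int P ->
  \forall T \near \oo, forall s : {ffun 'I_T -> 'I_d},
     cost l (xhat T (empirical R s)) P <= chat_star chat xhat (empirical R s) T.
Proof.
move=> ha haT hg P [P0 P1].
set pm := \prod_i P ord0 i.
have pm0 : 0 < pm by apply: prodr_gt0.
have /limn_esup_lt_near rate : (limn_esup (fun T : nat => ((a T)^-1)%:E *
       elog (probT P (fun s : {ffun 'I_T -> 'I_d} =>
         (chat_star chat xhat (empirical R s) T < cost l (xhat T (empirical R s)) P)%R)))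
     < (- (1/2))%:E)%E.
  by apply: le_lt_trans (hg P (conj P0 P1)) _; rewrite lte_fin; lra.
have /cvgryPgt/(_ (- 2 * ln pm)) faster := haT.
have T0 : \forall T \near \oo, (0 < T)%N by exists 1%N.
apply: filterS3 T0 rate faster => T T0 rateT fasterT s.
rewrite leNgt; apply/negP => disappointed.
have aT0 := ha _ T0; have TR0 : 0 < T%:R :> R by rewrite ltr0n.
move: rateT; set p := probT _ _ => rateT.
have pT : pm ^+ T <= p by apply: (probT_ge_sample _ _ disappointed) => // i; apply/ltW.
have p0 : 0 < p by apply: lt_le_trans pT; apply: exprn_gt0.
have lnp : ln pm * T%:R <= ln p by rewrite mulr_natr -lnXn // ler_ln // posrE exprn_gt0.
move: rateT; rewrite /elog gt_eqF // -EFinM lte_fin mulrC ltr_pdivrMr // => rateT.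
move: fasterT; rewrite ltr_pdivlMr // => fasterT.
nra.
Qed.
End SampleCalibration.

(* Equicontinuity at every point of the compact set X upgrades, by a finite
   covering argument, to continuity in the distribution that is uniform in both
   the decision x in X and the sample size T. *)
Lemma equicont_uniform (R : realType) (n d : nat) (X : set 'rV[R]_n)
    (chat : predictor R n d) : compact X -> equicont X chat ->
  forall P, simplex P -> forall e, 0 < e -> exists2 delta, 0 < delta &
    forall Q, simplex Q -> `|Q - P| < delta ->
      forall y T, X y -> `|chat y P T - chat y Q T| < e.
Proof.
move=> hX heq P sP e e0.
have local : forall x, X x -> \forall y \near x & Q \near P,
    X y -> simplex Q -> forall T, `|chat y P T - chat y Q T| < e.
  move=> x Xx; have e2 : 0 < e / 2 by rewrite divr_gt0.
  have [delta d0 hdelta] := heq x P Xx sP _ e2.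
  near=> y Q => Xy sQ T.
  have xy : `|y - x| < delta.
    have : ball x delta y by near: y; apply: nbhsx_ballx.
    by rewrite -ball_normE /ball_ /= distrC.
  have PQ : `|Q - P| < delta.
    have : ball P delta Q by near: Q; apply: nbhsx_ballx.
    by rewrite -ball_normE /ball_ /= distrC.
  have hQ := hdelta y Q Xy sQ xy PQ T.
  have hP := hdelta y P Xy sP xy; rewrite subrr normr0 in hP.
  have {}hP := hP d0 T.
  have -> : chat y P T - chat y Q T =
    (chat x P T - chat y Q T) - (chat x P T - chat y P T) by ring.
  by apply: le_lt_trans (ler_normB _ _) _; lra.
have cover := (compact_near_coveringP X).1 hX _ (nbhs P)
  (fun Q y => X y -> simplex Q -> forall T, `|chat y P T - chat y Q T| < e) _ local.
have [delta d0 hdelta] := (nbhs_ballP P _).1 (cover _).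
exists delta => // Q sQ PQ y T Xy.
by apply: hdelta => //; rewrite -ball_normE /ball_ /= distrC.
Unshelve. all: by end_near. Qed.

Lemma card_sample_eq (m T : nat) (s : {ffun 'I_T -> 'I_m}) i :
  #|[set t | s t == i]| = count (pred1 i) [seq s t | t <- enum 'I_T].
Proof.
rewrite count_map cardE {1}/enum_mem size_filter -enumT.
by apply: eq_count => t; apply/asboolP/idP.
Qed.

Lemma sum_count_pred1 (m : nat) (sq : seq 'I_m) : (\sum_i count (pred1 i) sq)%N = size sq.
Proof.
elim: sq => [|x sq IH] /=; first by rewrite big1.
rewrite big_split /= IH (bigD1 x) //= eqxx big1 // => i /negbTE.
by rewrite eq_sym => ->.
Qed.

Section Empirical.
Variables (R : realType) (d : nat).

Lemma empirical_simplex T (s : {ffun 'I_T -> 'I_d}) : (0 < T)%N -> simplex (empirical R s).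
Proof.
move=> T0; split => [i|]; first by rewrite mxE divr_ge0.
under eq_bigr do rewrite mxE.
rewrite -mulr_suml -natr_sum; under eq_bigr do rewrite card_sample_eq.
by rewrite sum_count_pred1 size_map size_enum_ord divff // pnatr_eq0 -lt0n.
Qed.

Lemma sample_of_counts T (k : 'I_d.+1 -> nat) : (\sum_i k i)%N = T ->
  exists s : {ffun 'I_T -> 'I_d.+1}, forall j, #|[set t | s t == j]| = k j.
Proof.
move=> sumk; set sq := flatten [seq nseq (k i) i | i <- enum 'I_d.+1].
have cnt j : count (pred1 j) sq = k j.
  rewrite /sq count_flatten -map_comp sumnE big_map big_enum /=.
  rewrite (bigD1 j) //= count_nseq /= eqxx mul1n big1 ?addn0 // => i /negbTE.
  by rewrite count_nseq /= eq_sym => ->.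
have size_sq : size sq = T.
  by rewrite -sum_count_pred1 -sumk; apply: eq_bigr => i _; apply: cnt.
exists [ffun t : 'I_T => nth ord0 sq t] => j; rewrite card_sample_eq -[RHS]cnt.
congr count; rewrite -[RHS](mkseq_nth ord0 sq) size_sq /mkseq -val_enum_ord -map_comp.
by apply: eq_map => t; rewrite /= ffunE.
Qed.


(* Rounding T * P down coordinatewise and giving the (fewer than d+1) missing
   units to the first coordinate yields counts summing to T, each within d+1
   of T * P(j). *)
Lemma counts_rounding (P : 'rV[R]_d.+1) T : simplex P ->
  exists k : 'I_d.+1 -> nat, (\sum_i k i)%N = T /\
    forall j, `|(k j)%:R - T%:R * P ord0 j| <= d.+1%:R.
Proof.
move=> [P0 P1]; set k := fun i : 'I_d.+1 => Num.truncn (T%:R * P ord0 i).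
have hk i : (k i)%:R <= T%:R * P ord0 i < (k i)%:R + 1.
  by rewrite natr1; apply: truncn_itv; rewrite mulr_ge0.
have sumTP : \sum_i T%:R * P ord0 i = T%:R by rewrite -mulr_sumr P1 mulr1.
set K := (\sum_i k i)%N.
have KT : (K <= T)%N.
  rewrite -(ler_nat R) natr_sum -sumTP.
  by apply: ler_sum => i _; case/andP: (hk i).
have TK : (T - K)%:R < d.+1%:R :> R.
  have -> : d.+1%:R = \sum_(i < d.+1) (1 : R) by rewrite sumr_const card_ord.
  rewrite natrB // ltrBlDr -sumTP natr_sum -big_split /=.
  apply: ltr_sum => [|i _]; first by apply/hasP; exists ord0; rewrite ?mem_index_enum.
  by case/andP: (hk i); rewrite addrC.
exists (fun i => k i + (i == ord0) * (T - K))%N; split.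
  rewrite big_split /= -/K (bigD1 ord0) //= mul1n big1 ?addn0 ?subnKC //.
  by move=> i /negbTE ->.
move=> j; case/andP: (hk j) => lo hi; rewrite natrD natrM.
have extra0 : 0 <= (j == ord0)%:R * (T - K)%:R :> R by rewrite mulr_ge0.
have extraD : (j == ord0)%:R * (T - K)%:R <= d.+1%:R :> R.
  by apply: le_trans (ltW TK); rewrite ler_piMl // lern1 leq_b1.
have D1 : 1 <= d.+1%:R :> R by rewrite ler1n.
by rewrite ler_norml; apply/andP; split; lra.
Qed.

Lemma empirical_dense (P : 'rV[R]_d.+1) : simplex P -> forall delta, 0 < delta ->
  \forall T \near \oo, exists s : {ffun 'I_T -> 'I_d.+1}, `|empirical R s - P| < delta.
Proof.
move=> sP delta d0; have D0 : 0 < d.+1%:R :> R by rewrite ltr0n.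
exists (Num.truncn (d.+1%:R / delta)).+1 => // T /= hT.
have DT : d.+1%:R / delta < T%:R.
  have /andP[_ h] := truncn_itv (ltW (divr_gt0 D0 d0)).
  by apply: lt_le_trans h _; rewrite ler_nat.
have T0 : 0 < T%:R :> R by apply: le_lt_trans DT; rewrite divr_ge0 // ltW.
have [k [sumk hk]] := counts_rounding T sP.
have [s hs] := sample_of_counts sumk; exists s.
change (mx_norm (empirical R s - P) < delta).
rewrite mx_normrE; apply: bigmax_lt => // [[i j]] _ /=; rewrite (ord1 i) !mxE hs.
have -> : (k j)%:R / T%:R - P ord0 j = ((k j)%:R - T%:R * P ord0 j) / T%:R.
  by field; rewrite gt_eqF.
rewrite normrM [`|T%:R^-1|]ger0_norm ?invr_ge0 ?ltW //.
apply: le_lt_trans (_ : d.+1%:R / T%:R < _); first by rewrite ler_pM2r ?invr_gt0.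
by rewrite ltr_pdivrMr // mulrC -ltr_pdivrMr.
Qed.
End Empirical.

Section LowerBound.
Variables (R : realType) (n d : nat) (X : set 'rV[R]_n) (l : 'rV[R]_n -> 'I_d.+1 -> R).
Local Notation D := d.+1.

Definition near_vertex (y : R) (i : 'I_D) : 'rV[R]_D :=
  \row_j (y / D%:R + (j == i)%:R * (1 - y)).

Lemma near_vertex_interior y i : 0 < y < 1 -> simplex_int (near_vertex y i).
Proof.
case/andP=> y0 y1; have D0 : 0 < D%:R :> R by rewrite ltr0n.
split=> [j|]; first by rewrite mxE ltr_pwDl ?divr_gt0 // mulr_ge0 //; lra.
under eq_bigr do rewrite mxE.
rewrite big_split /= sumr_const card_ord (bigD1 i) //= eqxx mul1r big1 ?addr0.
  by rewrite -[y / _ *+ _]mulr_natr mulfVK ?gt_eqF //; ring.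
by move=> j /negbTE ->; rewrite mul0r.
Qed.

Lemma loss_le_near_vertex_cost (M y : R) x i : 0 <= y -> (forall j, `|l x j| <= M) ->
  l x i <= cost l x (near_vertex y i) + 2 * y * M.
Proof.
move=> y0 hM; have D0 : 0 < D%:R :> R by rewrite ltr0n.
rewrite /cost; under eq_bigr do rewrite mxE mulrDr.
rewrite big_split /= [X in _ + X + _](bigD1 i) //= eqxx mul1r.
rewrite [\sum_(j | j != i) _]big1 ?addr0; last by move=> j /negbTE ->; rewrite mul0r mulr0.
have avg : - M <= \sum_j l x j / D%:R.
  have -> : - M = \sum_(j < D) (- M / D%:R).
    by rewrite sumr_const card_ord -[_ *+ _]mulr_natr mulfVK ?gt_eqF.
  apply: ler_sum => j _; rewrite ler_pM2r ?invr_gt0 //.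
  by have := hM j; rewrite ler_norml => /andP[].
have -> : \sum_j l x j * (y / D%:R) = y * \sum_j l x j / D%:R.
  by rewrite mulr_sumr; apply: eq_bigr => j _; rewrite mulrCA.
have := hM i; rewrite ler_norml => /andP[_ lM].
nra.
Qed.

Variables (a : nat -> R) (chat : predictor R n D) (xhat : prescriptor R n D).
Hypotheses (hX : compact X) (hl : forall i, {within X, continuous (fun x => l x i)}).
Hypotheses (ha : forall T, (0 < T)%N -> 0 < a T)
  (haT : (fun T : nat => a T / T%:R) @ \oo --> +oo).
Hypotheses (hpp : pp_pair X chat xhat) (hg : oos_guarantee l a chat xhat).

(* Applying the calibration of the guarantee to all near-vertex distributions
   at once: eventually, for every sample, the worst-case loss of the prescribed
   decision exceeds the predicted cost by at most e. *)
Lemma maxloss_le_prediction (e : R) : 0 < e ->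
  \forall T \near \oo, forall s : {ffun 'I_T -> 'I_D},
    maxloss l (xhat T (empirical R s)) <= chat_star chat xhat (empirical R s) T + e.
Proof.
move=> e0; have [M [M0 hM]] := loss_bounded hX hl.
set y := e / (2 * M + 2 + e).
have y0 : 0 < y by rewrite divr_gt0 //; lra.
have yMe : y * (2 * M + 2 + e) = e by rewrite mulfVK //; lra.
have y01 : 0 < y < 1 by rewrite y0 /=; nra.
have calibrated := filter_forall eventually_filter (fun i =>
  oos_guarantee_calibrated ha haT hg (near_vertex_interior i y01)).
have T0 : \forall T \near \oo, (0 < T)%N by exists 1%N.
apply: filterS2 T0 calibrated => T T0 calibratedT s.
have XQ := (hpp.2 _ T (empirical_simplex R s T0)).1.
have [i ->] := maxloss_attained l (xhat T (empirical R s)).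
apply: le_trans (loss_le_near_vertex_cost i (ltW y0) (fun j => hM _ j XQ)) _.
by apply: lerD; [apply: calibratedT | nra].
Qed.

(* Any guaranteed pair eventually predicts, at any distribution P, at least the
   robust value m up to e: compare P with a nearby empirical distribution Q,
   where the prescription at Q is never disappointing for its own worst case. *)
Lemma prediction_lower_bound (m : R) : (forall x, X x -> m <= maxloss l x) ->
  forall P, simplex P -> forall e : R, 0 < e ->
  \forall T \near \oo, m - e <= chat_star chat xhat P T.
Proof.
move=> hm P sP e e0; have [[_ [heq _]] hmin] := hpp.
have e2 : 0 < e / 2 by rewrite divr_gt0.
have [delta d0 close] := equicont_uniform hX heq sP e2.
have T0 : \forall T \near \oo, (0 < T)%N by exists 1%N.
apply: filterS3 T0 (empirical_dense sP d0) (maxloss_le_prediction e2).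
move=> T T0 [s Qs] predicted; set Q := empirical R s.
have sQ : simplex Q := empirical_simplex R s T0.
have [XQ minQ] := hmin Q T sQ; have [XP _] := hmin P T sP.
have m_le := hm _ XQ; have pred_le := predicted s; have argmin := minQ _ XP.
have := close Q sQ Qs (xhat T P) T XP; rewrite ltr_norml => /andP[cont _].
rewrite /chat_star in pred_le *; lra.
Qed.
End LowerBound.

(* The optimal expected cost lies below the expected cost of any feasible decision
   (the set of costs is bounded below when the losses are bounded). *)
Lemma cstar_le_cost (R : realType) (n d : nat) (X : set 'rV[R]_n)
    (l : 'rV[R]_n -> 'I_d -> R) (M : R) P x :
  (forall y i, X y -> `|l y i| <= M) -> simplex P -> X x -> cstar X l P <= cost l x P.
Proof.
move=> hM [P0 P1] Xx; apply: ge_inf; last by exists x.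
exists (- M) => _ [y Xy <-].
apply: (@le_trans _ _ (\sum_i - M * P ord0 i)); first by rewrite -mulr_sumr P1 mulr1.
apply: ler_sum => i _; apply: ler_wpM2r => //.
by have := hM y i Xy; rewrite ler_norml => /andP[].
Qed.

Lemma eratio_limsup_le1 (R : realType) (c m : R) (v : nat -> R) : c <= m ->
  (forall e : R, 0 < e -> \forall T \near \oo, m - e <= v T) ->
  (limn_esup (fun T => eratio `|m - c|%R `|v T - c|%R) <= 1)%E.
Proof.
move=> cm v_ge; have [->|mc] := eqVneq m c.
  apply: limn_esup_le_near; apply: nearW => T; rewrite subrr normr0 /eratio eqxx.
  by case: ifP; rewrite // mul0r lee_fin.
have gap0 : 0 < m - c by rewrite subr_gt0 lt_neqAle eq_sym mc.
apply/lee_addgt0Pr => e e0; apply: limn_esup_le_near.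
have e1 : 0 < 1 + e by lra.
set eps := (m - c) * e / (1 + e).
have eps_e : eps * (1 + e) = (m - c) * e by rewrite mulfVK ?gt_eqF.
have eps0 : 0 < eps by rewrite divr_gt0 // mulr_gt0.
apply: filterS (v_ge _ eps0) => T vT.
have gap : (m - c) - eps <= `|v T - c| by apply: le_trans (ler_norm _); lra.
have gap_pos : 0 < (m - c) - eps by nra.
rewrite /eratio (gtr0_norm gap0) gt_eqF; last by apply: lt_le_trans gap.
rewrite -EFinD lee_fin ler_pdivrMr; last by apply: lt_le_trans gap.
apply: le_trans (ler_wpM2l (ltW e1) gap); nra.
Qed.

Unset Implicit Arguments. Set Strict Implicit.
Theorem mainTheorem13 (R : realType) (n d : nat) (hd : (1 < d)%N)
  (X : set 'rV[R]_n) (hXc : compact X)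
  (l : 'rV[R]_n -> 'I_d -> R)
  (hl : forall i, {within X, continuous (fun x => l x i)})
  (a : nat -> R) (ha_pos : forall T, (0 < T)%N -> 0 < a T)
  (ha_inf : a @ \oo --> +oo)
  (haT : (fun T : nat => a T / T%:R) @ \oo --> +oo)
  (xR : prescriptor R n d)
  (hxR : forall T P, X (xR T P) /\
           forall y, X y -> maxloss l (xR T P) <= maxloss l y) :
  let cR : predictor R n d := fun x _ _ => maxloss l x in
  pp_pair X cR xR /\ oos_guarantee l a cR xR /\
  forall (chat : predictor R n d) (xhat : prescriptor R n d),
    pp_pair X chat xhat -> oos_guarantee l a chat xhat ->
    pp_le X l cR xR chat xhat.
Proof.
case: d hd l hl xR hxR => // d _ l hl xR hxR cR.
split; first exact: robust_pp_pair.
split; first exact: robust_oos_guarantee.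
move=> chat xhat hpp hg P [P0 P1].
have sP : simplex P by split=> // i; apply/ltW.
(* m is the robust value min_X maxloss, attained by every xR T P. *)
set m := maxloss l (xR 0%N P).
have m_min : forall y, X y -> m <= maxloss l y := (hxR 0%N P).2.
have robust_const T : chat_star cR xR P T = m.
  apply/le_anti/andP; split; first exact: (hxR T P).2 _ (hxR 0%N P).1.
  exact: m_min (hxR T P).1.
have [M [_ hM]] := loss_bounded hXc hl.
have cstar_m : cstar X l P <= m.
  exact: le_trans (cstar_le_cost hM sP (hxR 0%N P).1) (cost_le_maxloss _ _ sP).
rewrite /pp_le; under eq_fun do rewrite robust_const.
apply: eratio_limsup_le1 cstar_m _ => e e0.
exact: (prediction_lower_bound hXc hl ha_pos haT hpp hg m_min sP e0).
Qed.
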